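(* Let $n_1,\dots,n_l\ge 2$ be integers, and let $a_1,\dots,a_l$ be the discrepancies of the chain $[n_1,\dots,n_l]$, i.e. the unique solution of $\sum_j a_jE_j\cdot E_i=2-n_i$ for a chain of smooth rational curves $E_1,\dots,E_l$ with $E_i^2=-n_i$, $E_i\cdot E_{i+1}=1$, $E_i\cdot E_j=0$ for $|i-j|\ge2$. Then $a_k+a_{k+1}<1$ for all $1\le k\le l-1$ (equivalently, the minimal resolution of a log terminal singularity of type $A_{q,q_1}$ with this resolution graph has no redundant point) if and only if $(n_1,\dots,n_l)$, up to reversing the order, is one of: $(2,\dots,2)$ with $\alpha\ge1$ entries; $(2,\dots,2,3)$ with $\alpha\ge1$ entries equal to $2$; $(2,2,3,2)$; $(2,3,2)$; $(2,4)$; $(n)$ with $n\ge3$.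
   Context: Here all discrepancies satisfy $0\le a_i<1$, so a point of the minimal resolution is redundant (i.e. the multiplicity of $N=\sum a_iE_i$ at it is at least $1$) exactly when it is $E_k\cap E_{k+1}$ with $a_k+a_{k+1}\ge1$. Notation $[n_1,\dots,n_l]$ stands for the Hirzebruch–Jung continued fraction $n_1-1/(n_2-1/(\cdots-1/n_l))=q/q_1$ describing the singularity of type $A_{q,q_1}$; $[n_1,\dots,n_l]$ and $[n_l,\dots,n_1]$ describe the same singularity. *)

From HB Require Import structures.
From mathcomp Require Import all_boot all_order all_algebra.
Set Implicit Arguments. Unset Strict Implicit. Unset Printing Implicit Defensive.
Import Order.TTheory GRing.Theory Num.Theory.
Local Open Scope ring_scope.

(* Intersection numbers E_i . E_j (0-indexed) for the chain [n_1,...,n_l]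
   given as the sequence ns = [:: n_1; ...; n_l]. *)
Definition Eint (ns : seq nat) (i j : nat) : rat :=
  if i == j then - ((nth 0%N ns i)%:R)
  else if (i == j.+1) || (j == i.+1) then 1 else 0.

Definition is_discrepancy (ns : seq nat) (a : seq rat) : Prop :=
  size a = size ns /\
  forall i : nat, (i < size ns)%N ->
    \sum_(j < size ns) a`_j * Eint ns j i = 2 - (nth 0%N ns i)%:R.

Definition in_list (ns : seq nat) : Prop :=
  (exists alpha : nat, (1 <= alpha)%N /\ ns = nseq alpha 2%N) \/
  (exists alpha : nat, (1 <= alpha)%N /\ ns = rcons (nseq alpha 2%N) 3%N) \/
  ns = [:: 2; 2; 3; 2]%N \/
  ns = [:: 2; 3; 2]%N \/
  ns = [:: 2; 4]%N \/
  (exists n : nat, (3 <= n)%N /\ ns = [:: n]).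

From HB Require Import structures.
From mathcomp Require Import all_boot all_order all_algebra.
From mathcomp Require Import zify ring lra.
Import Order.TTheory GRing.Theory Num.Theory.
Local Open Scope ring_scope.

(* Put b_i := 1 - a_i (the log discrepancy of E_i) and b_0 = b_{l+1} := 1.
   The discrepancy equations become n_i b_i = b_{i-1} + b_{i+1}, and a_k + a_{k+1} < 1
   becomes b_k + b_{k+1} > 1 for the interior neighbours k, k+1.  A discrete minimum
   principle gives 0 <= b <= 1, and b is affine along every run of 2's.  Two entries
   >= 3 separated only by 2's contradict the inequality at their inner neighbours, so
   the chain is 2..2 m 2..2 with A-1 twos before m and B-1 after it.  Solving the
   two affine arms, the left slope is u = (m-2)B / (A + B + (m-2)AB), and the pairs on
   the left arm are fine iff (2A-1)u < 1, i.e. (m-2)B(A-1) < A+B; symmetrically on the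
   right. *)

Section DiscreteConvexity.

Context {R : realDomainType}.

Lemma min_principle (N w : nat -> R) (L : nat) :
  (forall i, (0 < i < L)%N -> 2 <= N i) ->
  (forall i, (0 < i < L)%N -> w i.-1 + w i.+1 <= N i * w i) ->
  0 <= w 0%N -> 0 <= w L -> forall i, (i <= L)%N -> 0 <= w i.
Proof.
move=> N_ge2 w_super w0 wL.
pose i0 : 'I_L.+1 := [arg min_(i < ord0) w i]%O.
have w_min i : (i <= L)%N -> w i0 <= w i.
  rewrite -ltnS => ltiL; rewrite /i0.
  by case: arg_minP => // j _ j_min; exact: (j_min (Ordinal ltiL)).
have [w_ge0 | w_lt0] := lerP 0 (w i0); first by move=> i /w_min; exact: le_trans.
have ex_min : exists j, (j <= L)%N && (w j == w i0) by exists i0; rewrite -ltnS ltn_ord eqxx.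
(* At the leftmost minimiser the left neighbour is strictly larger, which
   [w j.-1 + w j.+1 <= N j * w j <= 2 * w j] forbids when [w j < 0]. *)
case: (ex_minnP ex_min) => j /andP[jL /eqP wj] leftmost.
have j_int : (0 < j < L)%N.
  have boundary k : 0 <= w k -> j != k.
    by move=> wk; apply/eqP => ejk; move: wk; rewrite ejk in wj; rewrite wj leNgt w_lt0.
  by have := boundary _ w0; have := boundary _ wL; lia.
have lt_left : w j < w j.-1.
  rewrite lt_neqAle wj w_min ?andbT; last by lia.
  by apply/eqP => e; have := leftmost j.-1; rewrite -e eqxx andbT; lia.
have le_right : w j <= w j.+1 by rewrite wj; apply: w_min; lia.
have := w_super j j_int; have := N_ge2 j j_int; rewrite wj in lt_left le_right *.
nra.
Qed.

Section Harmonic.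

Context {b : nat -> R} {p q : nat}.
Hypothesis harmonic : forall k, (p < k < q)%N -> b k.-1 + b k.+1 = 2 * b k.

Lemma harmonic_increment r : (r < q - p)%N -> b (p + r.+1)%N - b (p + r)%N = b p.+1 - b p.
Proof.
elim: r => [|r IHr] ltrq; first by rewrite addn1 addn0.
have := harmonic (p + r.+1)%N; rewrite !addnS /= => /(_ ltac:(lia)) eq_r.
have := IHr (ltnW ltrq); rewrite addnS; lra.
Qed.

Lemma affine_of_harmonic r : (r <= q - p)%N -> b (p + r)%N = b p + r%:R * (b p.+1 - b p).
Proof.
elim: r => [|r IHr] ltrq; first by rewrite addn0 mul0r addr0.
have := harmonic_increment _ ltrq; rewrite -natr1 mulrDl mul1r addrA -IHr ?(ltnW ltrq); lra.
Qed.

End Harmonic.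

End DiscreteConvexity.

(* 1-based, so that positions 0 and (size ns).+1 are free for boundary values. *)
Definition chain_entry (ns : seq nat) (i : nat) : nat := nth 0 ns i.-1.

Lemma chain_entry_cons x t k : (0 < k)%N -> chain_entry (x :: t) k.+1 = chain_entry t k.
Proof. by case: k. Qed.

Lemma chain_entry_rev ns i : (0 < i <= size ns)%N ->
  chain_entry (rev ns) i = chain_entry ns ((size ns).+1 - i).
Proof.
move=> i_in; rewrite /chain_entry nth_rev; last by case/andP: i_in; case: i => // i _ /=; lia.
by case: i i_in => // i _; rewrite subSS subnS.
Qed.

Definition two_heavy (ns : seq nat) : Prop :=
  exists i j, [/\ (0 < i < j)%N, (j <= size ns)%N, (3 <= chain_entry ns i)%N,
    (3 <= chain_entry ns j)%N & forall k, (i < k < j)%N -> chain_entry ns k = 2%N].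

Lemma two_heavy_cons x t : two_heavy t -> two_heavy (x :: t).
Proof.
case=> i [j [ij j_le i3 j3 between]]; exists i.+1, j.+1.
rewrite !chain_entry_cons; try lia.
split=> //=; try lia.
by case=> // k k_in; rewrite chain_entry_cons ?between //; lia.
Qed.

Definition spike (A m B : nat) : seq nat := nseq A.-1 2%N ++ m :: nseq B.-1 2%N.

Lemma size_spike A m B : (0 < B)%N -> size (spike A m B) = (A.-1 + B)%N.
Proof. by move=> B_gt0; rewrite size_cat /= !size_nseq; lia. Qed.

Lemma rev_spike A m B : rev (spike A m B) = spike B m A.
Proof. by rewrite /spike rev_cat rev_cons !rev_nseq cat_rcons. Qed.

Lemma spike2E A B : (0 < B)%N -> spike A 2 B = nseq (A.-1 + B) 2%N.
Proof. by move=> B_gt0; rewrite /spike nseqD -[in RHS](prednK B_gt0). Qed.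

Lemma chain_entry_spike A m B k : (0 < A)%N -> (0 < k < A + B)%N ->
  chain_entry (spike A m B) k = if k == A then m else 2%N.
Proof.
move=> A_gt0 k_in; rewrite /chain_entry /spike nth_cat size_nseq.
case: ltnP => [lt_kA | le_Ak]; first by rewrite nth_nseq lt_kA; case: eqP => //; lia.
case: eqP => [-> | neq_kA]; first by rewrite subnn.
by rewrite (_ : k.-1 - A.-1 = (k - A).-1.+1)%N /= ?nth_nseq; [case: ifP => //; lia | lia].
Qed.

Lemma spike_or_two_heavy ns : all (fun n => 2 <= n)%N ns -> (0 < size ns)%N ->
  (exists A m B, [/\ 0 < A, 0 < B, 2 <= m & ns = spike A m B]%N) \/ two_heavy ns.
Proof.
elim: ns => [|x t IHt] //= /andP[x_ge2 t_ge2] _.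
case: t IHt t_ge2 => [|y t] IHt t_ge2; first by left; exists 1%N, x, 1%N.
case: (IHt t_ge2 isT) => [[A [m [B [A_gt0 B_gt0 m_ge2 ->]]]] | ]; last first.
  by right; apply: two_heavy_cons.
have [-> | x_ge3] : x = 2%N \/ (3 <= x)%N by lia.
  by left; case: A A_gt0 => // A _; exists A.+2, m, B.
have [-> | m_ge3] : m = 2%N \/ (3 <= m)%N by lia.
  by left; exists 1%N, x, (A.-1 + B).+1; split => //; rewrite spike2E.
right; exists 1%N, A.+1; split => //.
- by rewrite /= size_spike; lia.
- by rewrite chain_entry_cons // chain_entry_spike ?eqxx //; lia.
- case=> // k k_in; rewrite chain_entry_cons; last by lia.
  by rewrite chain_entry_spike //; [case: eqP => //; lia | lia].
Qed.

Definition spike_ok (A m B : nat) : bool :=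
  ((m - 2) * B * (A - 1) < A + B)%N && ((m - 2) * A * (B - 1) < A + B)%N.

Lemma spike_ok_sym A m B : spike_ok A m B = spike_ok B m A.
Proof. by rewrite /spike_ok andbC addnC. Qed.

Lemma in_list_spike ns : in_list ns ->
  exists A m B, [/\ 0 < A, 0 < B, 2 <= m, spike_ok A m B & ns = spike A m B]%N.
Proof.
case=> [[al [al_gt0 ->]] | [[al [al_gt0 ->]] | [-> | [-> | [-> | [n [n_ge3 ->]]]]]]].
- by exists 1%N, 2%N, al; rewrite spike2E //; split => //; rewrite /spike_ok; lia.
- by exists al.+1, 3%N, 1%N; rewrite /spike cats1; split => //; rewrite /spike_ok; lia.
- by exists 3%N, 3%N, 2%N.
- by exists 2%N, 3%N, 2%N.
- by exists 2%N, 4%N, 1%N.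
- by exists 1%N, n, 1%N; split => //; [lia | rewrite /spike_ok; lia].
Qed.

Lemma spike_ok_in_list A m B : (0 < A)%N -> (0 < B)%N -> (2 <= m)%N -> spike_ok A m B ->
  in_list (spike A m B) \/ in_list (rev (spike A m B)).
Proof.
wlog le_BA : A B / (B <= A)%N => [wlog A_gt0 B_gt0 m_ge2 ok | A_gt0 B_gt0 m_ge2].
  have [le_BA | lt_AB] := leqP B A; first exact: wlog.
  rewrite rev_spike -[spike A m B]revK rev_spike or_comm.
  by apply: wlog; rewrite ?(ltnW lt_AB) // spike_ok_sym.
case/andP=> ok_left _; left.
have [-> | m_ge3] : m = 2%N \/ (3 <= m)%N by lia.
  by rewrite spike2E //; left; exists (A.-1 + B)%N; split => //; lia.
have [A1 | A_ge2] : A = 1%N \/ (2 <= A)%N by lia.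
  have B1 : B = 1%N by lia.
  by rewrite A1 B1; do 5 right; exists m.
have m_le4 : (m <= 4)%N.
  rewrite leqNgt; apply/negP => m_ge5.
  have : (3 * (B * (A - 1)) <= (m - 2) * (B * (A - 1)))%N by rewrite leq_mul2r; lia.
  by rewrite !mulnA; nia.
have [m3 | m4] : m = 3%N \/ m = 4%N by lia.
- rewrite m3 -[(3 - 2)%N]/1%N mul1n in ok_left *.
  have B_le2 : (B <= 2)%N.
    rewrite leqNgt; apply/negP => B_ge3.
    have : (3 * (A - 1) <= B * (A - 1))%N by rewrite leq_mul2r; lia.
    by lia.
  have [-> | B2] : B = 1%N \/ B = 2%N by lia.
    by right; left; exists A.-1; rewrite /spike cats1; split => //; lia.
  have [-> | ->] : A = 2%N \/ A = 3%N by rewrite B2 in ok_left; lia.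
    by rewrite B2; do 3 right; left.
  by rewrite B2; do 2 right; left.
- rewrite m4 -[(4 - 2)%N]/2%N in ok_left *.
  have [B1 A2] : B = 1%N /\ A = 2%N by nia.
  by rewrite A2 B1; do 4 right; left.
Qed.

Section Chain.

Context {R : realDomainType}.
Implicit Types (ns : seq nat) (b : nat -> R).

Definition chain_solution ns b : Prop :=
  [/\ b 0%N = 1, b (size ns).+1 = 1 &
      forall i, (0 < i <= size ns)%N -> (chain_entry ns i)%:R * b i = b i.-1 + b i.+1].

Definition adjacent_sums_gt1 ns b : Prop :=
  forall k, (0 < k < size ns)%N -> 1 < b k + b k.+1.

Lemma chain_solution_bounded ns b : all (fun n => 2 <= n)%N ns -> chain_solution ns b ->
  forall i, (i <= (size ns).+1)%N -> 0 <= b i <= 1.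
Proof.
move=> ns_ge2 [b0 bL b_eq] i le_iL.
pose n j : R := (chain_entry ns j)%:R.
have n_ge2 j : (0 < j < (size ns).+1)%N -> 2 <= n j.
  by move=> j_in; rewrite ler_nat; apply: (all_nthP _ ns_ge2); lia.
rewrite -[b i <= 1]subr_ge0; apply/andP; split.
  apply: (@min_principle _ n b _ n_ge2); rewrite ?b0 ?bL //.
  by move=> j j_in; rewrite b_eq //; lia.
apply: (@min_principle _ n (fun j => 1 - b j) _ n_ge2); rewrite /= ?b0 ?bL ?subrr //.
move=> j j_in; have := n_ge2 j j_in; rewrite /n mulrBr mulr1 b_eq; [lra | lia].
Qed.

Lemma chain_solution_harmonic ns b p q : chain_solution ns b -> (q <= (size ns).+1)%N ->
  (forall k, (p < k < q)%N -> chain_entry ns k = 2%N) ->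
  forall k, (p < k < q)%N -> b k.-1 + b k.+1 = 2 * b k.
Proof. by move=> [_ _ b_eq] le_q twos k k_in; rewrite -b_eq ?twos //; lia. Qed.

Lemma two_heavy_not_adjacent_sums_gt1 ns b : all (fun n => 2 <= n)%N ns ->
  chain_solution ns b -> two_heavy ns -> ~ adjacent_sums_gt1 ns b.
Proof.
move=> ns_ge2 sol [i [j [ij le_jl heavy_i heavy_j twos]]] good.
have bnd := chain_solution_bounded _ _ ns_ge2 sol.
have slope : b j - b j.-1 = b i.+1 - b i.
  have := harmonic_increment (chain_solution_harmonic _ _ _ _ sol _ twos) (j - i).-1.
  have e1 : (i + (j - i).-1.+1)%N = j by lia.
  have e2 : (i + (j - i).-1)%N = j.-1 by lia.
  by rewrite e1 e2; apply; lia.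
have /andP[bi_ge0 _] := bnd i ltac:(lia); have /andP[bj_ge0 _] := bnd j ltac:(lia).
have /andP[_ bi1_le1] := bnd i.-1 ltac:(lia); have /andP[_ bj1_le1] := bnd j.+1 ltac:(lia).
have [_ _ b_eq] := sol.
(* With s the common slope on [i, j], the heavy equations give b_i <= (1 + s)/2 and
   b_j <= (1 - s)/2, the inner neighbour pairs b_i > (1 - s)/2 and b_j > (1 + s)/2. *)
have le_i : 3 * b i <= (chain_entry ns i)%:R * b i by rewrite ler_wpM2r // ler_nat.
have le_j : 3 * b j <= (chain_entry ns j)%:R * b j by rewrite ler_wpM2r // ler_nat.
rewrite b_eq in le_i; last by lia.
rewrite b_eq in le_j; last by lia.
have := good i ltac:(lia); have := good j.-1 ltac:(lia).
rewrite prednK; [lra | lia].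
Qed.

Definition chain_flip ns b i : R := b ((size ns).+1 - i)%N.

Lemma chain_solution_rev ns b : chain_solution ns b -> chain_solution (rev ns) (chain_flip ns b).
Proof.
case=> b0 bL b_eq; split; rewrite /chain_flip ?size_rev ?subn0 ?subnn // => i i_in.
rewrite chain_entry_rev // b_eq; last by lia.
rewrite addrC; congr (b _ + b _); lia.
Qed.

Lemma chain_flip_pair ns b k : (k <= size ns)%N ->
  chain_flip ns b (size ns - k) + chain_flip ns b (size ns - k).+1 = b k + b k.+1.
Proof. by move=> le_k; rewrite /chain_flip addrC; congr (b _ + b _); lia. Qed.

Lemma adjacent_sums_gt1_rev ns b :
  adjacent_sums_gt1 (rev ns) (chain_flip ns b) <-> adjacent_sums_gt1 ns b.
Proof.
rewrite /adjacent_sums_gt1 size_rev; split=> good k k_in.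
  by rewrite -(chain_flip_pair ns); [apply: good | ]; lia.
have kE : k = (size ns - (size ns - k))%N by lia.
by rewrite kE chain_flip_pair; [apply: good | ]; lia.
Qed.

Lemma spike_profile A m B b : (0 < A)%N -> (0 < B)%N -> chain_solution (spike A m B) b ->
  (forall k, (k <= A)%N -> b k = 1 - k%:R * (1 - b 1%N)) /\
  (1 - b 1%N) * (A%:R + B%:R + (m%:R - 2) * A%:R * B%:R) = (m%:R - 2) * B%:R.
Proof.
move=> A_gt0 B_gt0 sol; have [b0 bL b_eq] := sol.
have sizeE : size (spike A m B) = (A + B).-1 by rewrite size_spike //; lia.
rewrite sizeE prednK ?addn_gt0 ?A_gt0 // in bL.
have twos k : (0 < k < A + B)%N -> k != A -> chain_entry (spike A m B) k = 2%N.
  by move=> k_in /negbTE kA; rewrite chain_entry_spike // kA.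
have harm_left : forall k, (0 < k < A)%N -> b k.-1 + b k.+1 = 2 * b k.
  apply: (chain_solution_harmonic _ _ _ _ sol); first by rewrite sizeE; lia.
  by move=> k k_in; apply: twos; lia.
have harm_right : forall k, (A < k < A + B)%N -> b k.-1 + b k.+1 = 2 * b k.
  apply: (chain_solution_harmonic _ _ _ _ sol); first by rewrite sizeE; lia.
  by move=> k k_in; apply: twos; lia.
have b_left k : (k <= A)%N -> b k = 1 - k%:R * (1 - b 1%N).
  by move=> le_kA; rewrite -[k]add0n (affine_of_harmonic harm_left) ?subn0 // b0; ring.
split => //.
have at_A : m%:R * b A = b A.-1 + b A.+1.
  rewrite -b_eq ?sizeE; last by lia.
  by rewrite chain_entry_spike ?eqxx //; lia.
have := affine_of_harmonic harm_right B; rewrite bL addKn => /(_ (leqnn B)) b_AB.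
have A1 : A%:R = (A.-1)%:R + 1 :> R by rewrite natr1 prednK.
have := b_left A.-1 (leq_pred A); have := b_left A (leqnn A).
set u := 1 - b 1%N => bA bA1.
have e1 : (m%:R - 2) * (1 - A%:R * u) = u + (b A.+1 - b A).
  by rewrite -bA; rewrite A1 in bA; lra.
have e2 : B%:R * (b A.+1 - b A) = A%:R * u by lra.
have := congr1 (fun x => B%:R * x) e1; rewrite /=; lra.
Qed.

Lemma spike_left_pairs_gt1 A m B b : (0 < A)%N -> (0 < B)%N -> (2 <= m)%N ->
  chain_solution (spike A m B) b ->
  (forall k, (0 < k < A)%N -> 1 < b k + b k.+1) <-> ((m - 2) * B * (A - 1) < A + B)%N.
Proof.
move=> A_gt0 B_gt0 m_ge2 sol.
have [] := spike_profile _ _ _ _ A_gt0 B_gt0 sol; set u := 1 - b 1%N => b_left slope.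
set K := _ + _ + _ in slope.
have K_gt0 : 0 < K.
  have : 0 <= (m%:R - 2) * A%:R * B%:R :> R by rewrite !mulr_ge0 // subr_ge0 ler_nat.
  have : 1 <= A%:R :> R by rewrite ler1n.
  have : 0 <= B%:R :> R by [].
  rewrite /K; lra.
have u_ge0 : 0 <= u by rewrite -(pmulr_lge0 _ K_gt0) slope mulr_ge0 // subr_ge0 ler_nat.
have critE : ((m - 2) * B * (A - 1) < A + B)%N = ((2 * A%:R - 1) * u < 1).
  rewrite -(ltr_nat R) natrM natrM natrD !natrB //.
  rewrite -[RHS](ltr_pM2r K_gt0) mul1r -[_ * u * K]mulrA slope.
  have diffE : K - (2 * A%:R - 1) * ((m%:R - 2) * B%:R) =
      A%:R + B%:R - (m%:R - 2) * B%:R * (A%:R - 1) by rewrite /K; ring.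
  by rewrite -[RHS]subr_gt0 diffE subr_gt0.
have pair k : (k < A)%N -> b k + b k.+1 = 2 - (2 * k%:R + 1) * u.
  by move=> lt_kA; rewrite !b_left // 1?ltnW // -natr1; ring.
split=> [good | ineq k /andP[_ lt_kA]].
  have [-> | A_ge2] : A = 1%N \/ (2 <= A)%N by lia.
    by rewrite subnn muln0.
  have predA : (A.-1)%:R = A%:R - 1 :> R by rewrite -[in RHS](prednK A_gt0) -natr1 addrK.
  by have := good A.-1 ltac:(lia); rewrite critE pair ?predA; [lra | lia].
have : k%:R + 1 <= A%:R :> R by rewrite natr1 ler_nat.
by move: ineq; rewrite critE pair //; nra.
Qed.

Lemma spike_adjacent_sums_gt1 A m B b : (0 < A)%N -> (0 < B)%N -> (2 <= m)%N ->
  chain_solution (spike A m B) b -> adjacent_sums_gt1 (spike A m B) b <-> spike_ok A m B.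
Proof.
move=> A_gt0 B_gt0 m_ge2 sol.
have sizeE : size (spike A m B) = (A + B).-1 by rewrite size_spike //; lia.
have left_ok := spike_left_pairs_gt1 _ _ _ _ A_gt0 B_gt0 m_ge2 sol.
have := chain_solution_rev _ _ sol; rewrite rev_spike => sol_rev.
have right_ok := spike_left_pairs_gt1 _ _ _ _ B_gt0 A_gt0 m_ge2 sol_rev.
rewrite addnC in right_ok.
split=> [good | /andP[/left_ok ok_l /right_ok ok_r] k k_in].
  apply/andP; split; [apply/left_ok => k k_in | apply/right_ok].
    by apply: good; rewrite sizeE; lia.
  move: good; rewrite -adjacent_sums_gt1_rev rev_spike => good k k_in.
  by apply: good; rewrite size_spike //; lia.
have [lt_kA | le_Ak] := ltnP k A; first by apply: ok_l; lia.
rewrite -(chain_flip_pair (spike A m B)); last by lia.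
by apply: ok_r; rewrite sizeE; lia.
Qed.

Lemma in_list_adjacent_sums_gt1 ns b :
  in_list ns -> chain_solution ns b -> adjacent_sums_gt1 ns b.
Proof.
case/in_list_spike=> A [m [B [A_gt0 B_gt0 m_ge2 ok ->]]] sol.
exact/(spike_adjacent_sums_gt1 _ _ _ _ A_gt0 B_gt0 m_ge2 sol).
Qed.

Lemma adjacent_sums_gt1_iff_in_list ns b : (0 < size ns)%N ->
  all (fun n => 2 <= n)%N ns -> chain_solution ns b ->
  adjacent_sums_gt1 ns b <-> in_list ns \/ in_list (rev ns).
Proof.
move=> ns_gt0 ns_ge2 sol; split=> [good | [ns_in | rev_in]].
- have [[A [m [B [A_gt0 B_gt0 m_ge2 nsE]]]] | heavy] := spike_or_two_heavy _ ns_ge2 ns_gt0.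
    rewrite nsE in sol good *; apply: spike_ok_in_list => //.
    exact/(spike_adjacent_sums_gt1 _ _ _ _ A_gt0 B_gt0 m_ge2 sol).
  by case: (two_heavy_not_adjacent_sums_gt1 _ _ ns_ge2 sol heavy good).
- exact: in_list_adjacent_sums_gt1.
- exact/adjacent_sums_gt1_rev/in_list_adjacent_sums_gt1/chain_solution_rev.
Qed.

End Chain.

Lemma sum_nth_delta (R : pzSemiRingType) (a : seq R) n k : size a = n ->
  \sum_(j < n) a`_j * ((j : nat) == k)%:R = a`_k.
Proof.
move=> <-; rewrite (eq_bigr (fun j : 'I_(size a) => if (j : nat) == k then a`_j else 0)).
  by rewrite -big_mkcond big_ord1_eq; case: ltnP => // le_ak; rewrite nth_default.
by move=> j _; case: eqP; rewrite ?mulr1 ?mulr0.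
Qed.

Lemma EintE ns j i : Eint ns j i =
  (j.+1 == i)%:R - (nth 0%N ns i)%:R * (j == i)%:R + (j == i.+1)%:R.
Proof.
rewrite /Eint; have [-> | ne_ji] := eqVneq j i.
  have [-> ->] : (i.+1 == i) = false /\ (i == i.+1) = false by split; apply/eqP; lia.
  by rewrite mulr1 add0r addr0.
rewrite mulr0 subr0 [i == j.+1]eq_sym.
by case: (j =P i.+1) => [ji | _]; case: (j.+1 =P i) => [ij | _]; rewrite ?addr0 ?add0r //; lia.
Qed.

Lemma discrepancy_sum ns (a : seq rat) i : size a = size ns ->
  \sum_(j < size ns) a`_j * Eint ns j i =
  (0 :: a)`_i - (nth 0%N ns i)%:R * a`_i + a`_i.+1.
Proof.
move=> sizeE; under eq_bigr => j _ do rewrite EintE mulrDr mulrBr mulrCA.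
rewrite big_split sumrB -mulr_sumr !sum_nth_delta //; congr (_ - _ + _).
case: i => [|i] /=; first by rewrite big1 // => j _; rewrite mulr0.
by under eq_bigr => j _ do rewrite eqSS; rewrite sum_nth_delta.
Qed.

(* (0 :: a)`_i is the paper's a_i (1-based), and 0 for i = 0 and, by the nth
   default, for i = l+1. *)
Definition log_discrepancy (a : seq rat) (i : nat) : rat := 1 - (0 :: a)`_i.

Lemma discrepancy_chain_solution ns a :
  is_discrepancy ns a -> chain_solution ns (log_discrepancy a).
Proof.
case=> sizeE disc; split; rewrite /log_discrepancy /= ?subr0 //.
  by rewrite nth_default ?subr0 // sizeE.
case=> // i /andP[_ lt_i]; have := disc i lt_i; rewrite discrepancy_sum //=.
by case: i lt_i => [|i] _ /=; lra.
Qed.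

Theorem proposition4p3 (ns : seq nat) (a : seq rat) :
  (0 < size ns)%N -> all (fun n => 2 <= n)%N ns -> is_discrepancy ns a ->
  ((forall k : nat, (k.+1 < size ns)%N -> a`_k + a`_k.+1 < 1) <->
   (in_list ns \/ in_list (rev ns))).
Proof.
move=> ns_gt0 ns_ge2 disc.
have sol := discrepancy_chain_solution _ _ disc.
rewrite -(adjacent_sums_gt1_iff_in_list _ _ ns_gt0 ns_ge2 sol).
rewrite /adjacent_sums_gt1 /log_discrepancy.
split=> [lt1 [|k] // k_in | gt1 k k_in].
  by have /= := lt1 k ltac:(lia); lra.
by have /= := gt1 k.+1 ltac:(lia); lra.
Qed.
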